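(* Let $\mathcal{S}$ be a space of geometric source conditions and $\mathcal{Z}$ the space of molecular configurations, and let $C:\mathcal{S}\times\mathcal{Z}\to\mathcal{Z}$ be a function. Suppose that, for every rigid transformation $G$ (rotations and translations of 3D space, acting on the coordinate parts of configurations and on source conditions), $C$ is invariant in its first argument, i.e. $C(G\mathbf{s},\mathbf{z})=C(\mathbf{s},\mathbf{z})$, and equivariant in its second argument, i.e. $C(\mathbf{s},G\mathbf{z})=G\,C(\mathbf{s},\mathbf{z})$, for all $\mathbf{s}\in\mathcal{S}$, $\mathbf{z}\in\mathcal{Z}$. Define $\mathbf{v}=\mathbf{z}-C(\mathbf{s},\mathbf{z})$. Then the gradient $\nabla_{\mathbf{z}}\lVert\mathbf{v}\rVert_2^2=\nabla_{\mathbf{z}}\lVert\mathbf{z}-C(\mathbf{s},\mathbf{z})\rVert_2^2$ is equivariant to (such rigid) transformations of $\mathbf{z}$.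
   Context: A configuration of $N$ nodes (atoms or residues) is $\mathbf{z}=\{(\mathbf{x}_i,\mathbf{h}_i)\}_{i=1}^N$ with coordinates $\mathbf{x}_i\in\mathbb{R}^3$ and features $\mathbf{h}_i\in\mathbb{R}^d$; $\mathcal{Z}$ denotes the space of such configurations (of varying size $N$), viewed as points of $\mathbb{R}^{N\times(3+d)}$. Rigid transformations $G$ act on configurations by acting on all coordinates $\mathbf{x}_i$ (features unchanged). $\mathcal{S}$ is a general space of geometric objects (e.g. structures, surfaces, point clouds) on which rigid transformations also act. A map $F$ is equivariant to $G$ if $F(G\mathbf{z})=G\,F(\mathbf{z})$ and invariant if $F(G\mathbf{z})=F(\mathbf{z})$. *)

From HB Require Import structures.
From mathcomp Require Import all_boot all_order all_algebra.
From mathcomp Require Import all_classical all_reals all_analysis.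
Set Implicit Arguments. Unset Strict Implicit. Unset Printing Implicit Defensive.
Import Order.TTheory GRing.Theory Num.Theory.
Import numFieldNormedType.Exports.
Local Open Scope ring_scope.

(* A configuration of N nodes with d-dimensional features is a matrix
   z : 'M[R]_(N, 3 + d) whose i-th row is (x_i, h_i); the left 3 columns are
   the coordinates x_i (a row vector of R^3), the right d columns the
   features h_i. *)
Definition config (R : realType) (N d : nat) := 'M[R]_(N, 3 + d).

Definition is_rotation (R : realType) (Q : 'M[R]_3) : Prop :=
  Q^T *m Q = 1%:M /\ \det Q = 1.

(* Action of the rigid motion G = (Q, t) (x |-> x Q + t on row vectors) on a
   configuration: acts on every coordinate row, features unchanged. *)
Definition rigid_act (R : realType) (N d : nat) (Q : 'M[R]_3) (t : 'rV[R]_3)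
  (z : 'M[R]_(N, 3 + d)) : 'M[R]_(N, 3 + d) :=
  row_mx (lsubmx z *m Q + \matrix_(i < N) t) (rsubmx z).

(* Induced action of G = (Q, t) on vectors tangent to configuration space
   (e.g. gradients): only the linear part Q acts, on the coordinate part. *)
Definition rigid_act_vec (R : realType) (N d : nat) (Q : 'M[R]_3) (t : 'rV[R]_3)
  (v : 'M[R]_(N, 3 + d)) : 'M[R]_(N, 3 + d) :=
  row_mx (lsubmx v *m Q) (rsubmx v).

Definition sqnorm2 (R : realType) (m n : nat) (v : 'M[R]_(m, n)) : R :=
  \sum_(i < m) \sum_(j < n) v i j ^+ 2.

Definition grad (R : realType) (m n : nat) (f : 'M[R]_(m, n) -> R)
  (z : 'M[R]_(m, n)) : 'M[R]_(m, n) :=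
  \matrix_(i < m, j < n) ('D_(delta_mx i j) f z).

From HB Require Import structures.
From mathcomp Require Import all_boot all_order all_algebra.
From mathcomp Require Import all_classical all_reals all_analysis.
Import Order.TTheory GRing.Theory Num.Theory.
Import numFieldNormedType.Exports.
Local Open Scope ring_scope.

(* Since C(s, Gz) = G C(s, z), the residual v = z - C(s, z) transforms by the
   linear part Q of G alone, so f(z) = ||v||^2 is invariant under rigid
   motions.  Moving the base point of a directional derivative by G then
   rotates the direction: D_(Qu) f(Gz) = D_u f(z).  As Q is orthogonal, Q^T
   is both its inverse and its adjoint for the Frobenius inner product, so the
   gradient, the Riesz representative of the differential, transforms by Q as
   well. *)

Set Implicit Arguments. Unset Strict Implicit.

Section FrobeniusInnerProduct.
Variable R : comNzRingType.

Definition mxdot m n (X Y : 'M[R]_(m, n)) : R :=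
  \sum_(i < m) \sum_(j < n) X i j * Y i j.

Lemma mxdot_trace m n (X Y : 'M[R]_(m, n)) : mxdot X Y = \tr (X *m Y^T).
Proof.
rewrite /mxdot /mxtrace; apply: eq_bigr => i _; rewrite mxE.
by apply: eq_bigr => j _; rewrite mxE.
Qed.

Lemma mxdot_deltal m n (Y : 'M[R]_(m, n)) i j : mxdot (delta_mx i j) Y = Y i j.
Proof.
rewrite /mxdot (bigD1 i) //= [X in _ + X]big1 => [|k /negbTE nki]; last first.
  by apply: big1 => l _; rewrite mxE nki mul0r.
rewrite addr0 (bigD1 j) //= [X in _ + X]big1 => [|l /negbTE nlj]; last first.
  by rewrite mxE nlj andbF mul0r.
by rewrite mxE !eqxx mul1r addr0.
Qed.

Lemma linear_mxdot m n (L : {linear 'M[R]_(m, n) -> R^o}) X :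
  L X = mxdot X (\matrix_(i, j) L (delta_mx i j)).
Proof.
rewrite {1}(matrix_sum_delta X) linear_sum; apply: eq_bigr => i _.
by rewrite linear_sum; apply: eq_bigr => j _; rewrite linearZ mxE.
Qed.

End FrobeniusInnerProduct.

Section SquaredNorm.
Variable R : realType.

Lemma sqnorm2_mxdot m n (v : 'M[R]_(m, n)) : sqnorm2 v = mxdot v v.
Proof.
by apply: eq_bigr => i _; apply: eq_bigr => j _; rewrite expr2.
Qed.

Lemma differentiable_sqnorm2 m n (v : 'M[R]_(m, n)) :
  differentiable (@sqnorm2 R m n) v.
Proof.
have -> : @sqnorm2 R m n =
    \sum_(i < m) \sum_(j < n) (fun w : 'M[R]_(m, n) => w i j * w i j).
  apply/funext => w; rewrite /sqnorm2 fct_sumE; apply: eq_bigr => i _.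
  by rewrite fct_sumE; apply: eq_bigr => j _; rewrite expr2.
apply: differentiable_sum => i; apply: differentiable_sum => j.
by apply: differentiableM; apply: differentiable_coord.
Qed.

End SquaredNorm.

Section RigidAction.
Variables (R : realType) (N d : nat) (Q : 'M[R]_3).
Hypothesis orthQ : Q^T *m Q = 1%:M.

Lemma mxdot_rigid_act_vec_tr t t' (X Y : 'M[R]_(N, 3 + d)) :
  mxdot (rigid_act_vec Q^T t' X) Y = mxdot X (rigid_act_vec Q t Y).
Proof.
rewrite !mxdot_trace /rigid_act_vec -{3}(hsubmxK X) -{1}(hsubmxK Y).
by rewrite !tr_row_mx !mul_row_col trmx_mul !mulmxA.
Qed.

Lemma rigid_act_vec_trK t t' :
  cancel (@rigid_act_vec R N d Q^T t') (rigid_act_vec Q t).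
Proof.
move=> v; rewrite /rigid_act_vec row_mxKl row_mxKr -mulmxA orthQ mulmx1.
exact: hsubmxK.
Qed.

Lemma rigid_act_vecK_tr t t' :
  cancel (@rigid_act_vec R N d Q t) (rigid_act_vec Q^T t').
Proof.
move: orthQ => /mulmx1C orthQT v.
rewrite /rigid_act_vec row_mxKl row_mxKr -mulmxA orthQT mulmx1.
exact: hsubmxK.
Qed.

Lemma sqnorm2_rigid_act_vec t (v : 'M[R]_(N, 3 + d)) :
  sqnorm2 (rigid_act_vec Q t v) = sqnorm2 v.
Proof.
by rewrite !sqnorm2_mxdot -(mxdot_rigid_act_vec_tr t t) (rigid_act_vecK_tr t).
Qed.

Lemma rigid_actB t (w w' : 'M[R]_(N, 3 + d)) :
  rigid_act Q t w - rigid_act Q t w' = rigid_act_vec Q t (w - w').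
Proof.
rewrite /rigid_act /rigid_act_vec opp_row_mx add_row_mx !linearB /=.
by rewrite mulmxBl opprD addrACA subrr addr0.
Qed.

Lemma rigid_act_shift t (h : R) (u w : 'M[R]_(N, 3 + d)) :
  rigid_act Q t (h *: u + w) = h *: rigid_act_vec Q t u + rigid_act Q t w.
Proof.
rewrite /rigid_act /rigid_act_vec scale_row_mx add_row_mx !linearD !linearZ /=.
by rewrite mulmxDl -scalemxAl addrA.
Qed.

End RigidAction.

Section Gradient.
Variable R : realType.

Lemma derive_invariant_affine (V W : normedModType R) (f : V -> W)
    (g L : V -> V) :
  (forall w, f (g w) = f w) ->
  (forall h u w, g (h *: u + w) = h *: L u + g w) ->
  forall u z, 'D_(L u) f (g z) = 'D_u f z.
Proof.
move=> f_inv g_affine u z; rewrite /derive; do 2 f_equal.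
by apply/funext => h; rewrite /comp /shift /= -g_affine !f_inv.
Qed.

Lemma grad_mxdot m n (f : 'M[R]_(m, n) -> R) z X :
  differentiable f z -> 'd f z X = mxdot X (grad f z).
Proof.
move=> df; rewrite linear_mxdot; congr (mxdot X _).
by apply/matrixP => i j; rewrite !mxE deriveE.
Qed.

Lemma grad_rigid_invariant N d (f : 'M[R]_(N, 3 + d) -> R) Q t z :
  Q^T *m Q = 1%:M -> (forall w, f (rigid_act Q t w) = f w) ->
  differentiable f z ->
  grad f (rigid_act Q t z) = rigid_act_vec Q t (grad f z).
Proof.
move=> orthQ f_inv df; apply/matrixP => i j.
rewrite mxE -(rigid_act_vec_trK orthQ t t (delta_mx i j)).
rewrite (derive_invariant_affine f_inv (rigid_act_shift Q t)) deriveE //.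
by rewrite grad_mxdot // (mxdot_rigid_act_vec_tr _ t) mxdot_deltal.
Qed.

End Gradient.

Theorem theorem1 (R : realType) (N d : nat) (S : Type)
  (actS : 'M[R]_3 -> 'rV[R]_3 -> S -> S)
  (C : S -> 'M[R]_(N, 3 + d) -> 'M[R]_(N, 3 + d))
  (C_diff : forall s z, differentiable (C s) z)
  (C_inv : forall Q t, is_rotation Q ->
     forall s z, C (actS Q t s) z = C s z)
  (C_eqv : forall Q t, is_rotation Q ->
     forall s z, C s (rigid_act Q t z) = rigid_act Q t (C s z)) :
  forall Q t, is_rotation Q -> forall s z,
    grad (fun w => sqnorm2 (w - C s w)) (rigid_act Q t z)
    = rigid_act_vec Q t (grad (fun w => sqnorm2 (w - C s w)) z).
Proof.
move=> Q t rotQ s z; have [orthQ _] := rotQ.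
apply: grad_rigid_invariant => //.
  by move=> w; rewrite C_eqv // rigid_actB sqnorm2_rigid_act_vec.
apply: (@differentiable_comp _ _ _ _ (fun w => w - C s w) (@sqnorm2 R _ _)).
  exact: differentiableB.
exact: differentiable_sqnorm2.
Qed.
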